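(* Let $A$ be an $n\times n$ generalized tournament matrix and let $X$ be a clan of $A$. Then $\mathrm{Inv}(A,X)$ has the same principal minors as $A$, i.e. $\det \mathrm{Inv}(A,X)[Y]=\det A[Y]$ for every nonempty $Y\subseteq[n]$.
   Context: A generalized tournament matrix of order $n$ is a real $n\times n$ matrix $M=(m_{ij})$ with nonnegative entries satisfying $M+M^{t}=J_n-I_n$. Write $[n]=\{1,\ldots,n\}$; $M[Y]$ is the principal submatrix indexed by $Y$. A clan of $M$ is a subset $X\subseteq[n]$ such that for all $i,j\in X$ and $k\in[n]\setminus X$, $m_{ik}=m_{jk}$ and $m_{ki}=m_{kj}$. For $X\subseteq[n]$, $\mathrm{Inv}(M,X)$ is the matrix obtained from $M$ by replacing $m_{ij}$ by $m_{ji}$ for all $i,j\in X$. *)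

From HB Require Import structures.
From mathcomp Require Import all_boot all_order all_algebra.
From mathcomp Require Import reals.
Set Implicit Arguments. Unset Strict Implicit. Unset Printing Implicit Defensive.
Import Order.TTheory GRing.Theory Num.Theory.
Local Open Scope ring_scope.

Definition gen_tournament (R : realType) (n : nat) (M : 'M[R]_n) : Prop :=
  (forall i j, 0 <= M i j) /\
  (forall i j, M i j + M j i = (if i == j then 0 else 1)).

Definition clan (R : realType) (n : nat) (M : 'M[R]_n) (X : {set 'I_n}) : Prop :=
  forall i j k, i \in X -> j \in X -> k \notin X ->
    M i k = M j k /\ M k i = M k j.

Definition Inv (R : realType) (n : nat) (M : 'M[R]_n) (X : {set 'I_n}) : 'M[R]_n :=
  \matrix_(i, j) (if (i \in X) && (j \in X) then M j i else M i j).

(* Principal submatrix M[Y], rows/columns indexed by Y in increasing order. *)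
Definition principal_submx (R : realType) (n : nat) (M : 'M[R]_n) (Y : {set 'I_n})
  : 'M[R]_#|Y| :=
  \matrix_(i, j) M (enum_val i) (enum_val j).

(* Fix e in X, subtract row e from the other rows of X and column e from the
   other columns of X. This congruence has determinant 1 and commutes with
   Inv(-, X); since X is a clan, it leaves every entry linking X \ {e} to the
   complement of X equal to 0. Splitting row e into its parts inside and
   outside X then writes the determinant as a sum of two block-triangular
   determinants, with diagonal blocks indexed by X, ~X and by X \ {e},
   ~(X \ {e}) respectively; in each, Inv(-, X) transposes one diagonal block
   and fixes the other. *)

From mathcomp Require Import all_boot all_order all_algebra.
From mathcomp Require Import perm.
From mathcomp Require Import reals.
Import GRing.Theory.
Set Implicit Arguments.
Unset Strict Implicit.
Unset Printing Implicit Defensive.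
Local Open Scope ring_scope.

Section BlockDeterminants.

Variables (R : comPzRingType) (n : nat).
Implicit Types (M A B : 'M[R]_n) (S : {set 'I_n}) (e : 'I_n).

Definition padmx S M : 'M[R]_n :=
  \matrix_(i, j) if (i \in S) && (j \in S) then M i j else (i == j)%:R.

Lemma padmx_tr S M : padmx S M^T = (padmx S M)^T.
Proof. by apply/matrixP => i j; rewrite !mxE andbC eq_sym. Qed.

Lemma eq_padmx S A B :
  (forall i j, i \in S -> j \in S -> A i j = B i j) -> padmx S A = padmx S B.
Proof.
move=> eqAB; apply/matrixP => i j; rewrite !mxE.
by case: ifP => // /andP[iS jS]; exact: eqAB.
Qed.

Lemma det_unit_rows S A B :
  (forall i j, i \in S -> A i j = (i == j)%:R) ->
  (forall i j, i \in S -> B i j = (i == j)%:R) ->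
  (forall i j, i \notin S -> j \notin S -> A i j = B i j) ->
  \det A = \det B.
Proof.
move=> A1 B1 eqAB; rewrite /determinant.
apply: eq_bigr => s _; congr (_ * _).
have [fixS | /forall_inPn[i iS sii]] := boolP [forall i in S, s i == i].
  apply: eq_bigr => i _; have [iS | iNS] := boolP (i \in S).
    by rewrite A1 // B1.
  apply: eqAB => //; apply: contra iNS => siS.
  by have /eqP/perm_inj <- := forall_inP fixS _ siS.
rewrite (bigD1 i) // [RHS](bigD1 i) //= A1 // B1 //.
by rewrite eq_sym (negbTE sii) !mul0r.
Qed.

Lemma det_blocktrig S M :
  (forall i j, i \in S -> j \notin S -> M i j = 0) ->
  \det M = \det (padmx S M) * \det (padmx (~: S) M).
Proof.
move=> M0; pose U := \matrix_(i, j) if i \in S then (i == j)%:R else M i j.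
have -> : \det M = \det (padmx S M *m U).
  congr (\det _); apply/matrixP => i j; rewrite mxE.
  have [iS | iNS] := boolP (i \in S); last first.
    rewrite (bigD1 i) //= big1 => [|k ki]; rewrite !mxE (negbTE iNS) /=.
      by rewrite eqxx mul1r addr0.
    by rewrite eq_sym (negbTE ki) mul0r.
  rewrite (bigD1 j) //= big1 => [|k kj]; rewrite !mxE iS /=.
    have [jS | jNS] := boolP (j \in S); first by rewrite eqxx mulr1 addr0.
    have /negbTE-> : i != j by apply: contraNneq jNS => <-.
    by rewrite M0 // mul0r addr0.
  have [kS | kNS] := boolP (k \in S); first by rewrite (negbTE kj) mulr0.
  have /negbTE-> : i != k by apply: contraNneq kNS => <-.
  by rewrite mul0r.
rewrite det_mulmx; congr (_ * _).
apply: (det_unit_rows (S := S)) => [i j iS | i j iS | i j iNS jNS].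
- by rewrite mxE iS.
- by rewrite mxE in_setC iS.
- by rewrite !mxE !in_setC iNS jNS (negbTE iNS).
Qed.

Definition restrict_row e S M : 'M[R]_n :=
  \matrix_(i, j) if (i == e) && (j \notin S) then 0 else M i j.

Lemma det_restrict_row_split e S M :
  \det M = \det (restrict_row e S M) + \det (restrict_row e (~: S) M).
Proof.
rewrite -[\det (restrict_row e S M)]mul1r.
rewrite -[\det (restrict_row e (~: S) M)]mul1r.
apply: (determinant_multilinear (i0 := e)); rewrite ?scale1r.
- apply/rowP => j; rewrite !mxE eqxx inE.
  by case: (j \in S); rewrite ?addr0 ?add0r.
- by apply/matrixP => i j; rewrite !mxE eq_sym (negbTE (neq_lift _ _)).
- by apply/matrixP => i j; rewrite !mxE eq_sym (negbTE (neq_lift _ _)).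
Qed.

Definition elim_mx S e : 'M[R]_n :=
  \matrix_(i, k) ((i == k)%:R - (i \in S)%:R * (k == e)%:R).

Lemma mul_elim_mx S e M i j :
  (elim_mx S e *m M) i j = M i j - (i \in S)%:R * M e j.
Proof.
rewrite mxE; under eq_bigr do rewrite mxE mulrBl; rewrite sumrB; congr (_ - _).
  rewrite (bigD1 i) //= eqxx mul1r big1 ?addr0 // => k ki.
  by rewrite eq_sym (negbTE ki) mul0r.
rewrite (bigD1 e) //= eqxx mulr1 big1 ?addr0 // => k ke.
by rewrite (negbTE ke) mulr0 mul0r.
Qed.

Lemma mul_mx_elim_tr S e M i j :
  (M *m (elim_mx S e)^T) i j = M i j - (j \in S)%:R * M i e.
Proof. by rewrite -{1}[M]trmxK -trmx_mul mxE mul_elim_mx !mxE. Qed.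

Lemma det_elim_mx S e : e \notin S -> \det (elim_mx S e) = 1.
Proof.
move=> eNS; rewrite -(det1 R n).
apply: (det_unit_rows (S := [set e])) => [i j | i j | i j iNe jNe];
  rewrite !mxE.
- by rewrite inE => /eqP->; rewrite (negbTE eNS) mul0r subr0.
- by [].
- by rewrite inE in jNe; rewrite (negbTE jNe) mulr0 subr0.
Qed.

End BlockDeterminants.

Arguments elim_mx {R n} S e.

Section ClanInversion.

Variables (R : realType) (n : nat).
Implicit Types (M N P Q : 'M[R]_n) (X : {set 'I_n}) (e : 'I_n).

Lemma Inv_congruence Q M X :
  (forall i j, (i \in X) != (j \in X) -> Q i j = 0) ->
  Inv (Q *m M *m Q^T) X = Q *m Inv M X *m Q^T.
Proof.
move=> Q0.
have Qlink i k : Q i k = 0 \/ (i \in X) = (k \in X).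
  by case: (eqVneq (i \in X) (k \in X)) => [|/Q0]; [right | left].
have mulE N i j :
    (Q *m N *m Q^T) i j = \sum_k \sum_l Q i k * N k l * Q j l.
  rewrite mxE; under eq_bigr do rewrite !mxE big_distrl.
  exact: exchange_big.
apply/matrixP => i j; rewrite [LHS]mxE !mulE.
case: ifP => [/andP[iX jX] | notXX].
  rewrite [RHS]exchange_big; apply: eq_bigr => k _; apply: eq_bigr => l _ /=.
  case: (Qlink j k) => [->|jk]; first by rewrite !mul0r mulr0.
  case: (Qlink i l) => [->|il]; first by rewrite mulr0 !mul0r.
  by rewrite mxE -jk -il iX jX mulrC mulrA mulrAC.
apply: eq_bigr => k _; apply: eq_bigr => l _.
case: (Qlink i k) => [->|ik]; first by rewrite !mul0r.
case: (Qlink j l) => [->|jl]; first by rewrite !mulr0.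
by rewrite mxE -ik -jl notXX.
Qed.

Definition confined M (S X : {set 'I_n}) :=
  forall i z, i \in S -> z \notin X -> M i z = 0 /\ M z i = 0.

Lemma clan_elim_confined M X e (E := elim_mx (X :\ e) e) :
  clan M X -> e \in X -> confined (E *m M *m E^T) (X :\ e) X.
Proof.
move=> clM eX i z iX' zNX.
have zX' : z \notin X :\ e by rewrite inE (negbTE zNX) andbF.
have iX : i \in X by move: iX'; rewrite inE => /andP[].
have [Miz Mzi] := clM i e z iX eX zNX.
rewrite !mul_mx_elim_tr !mul_elim_mx (negbTE zX') iX' !mul0r !subr0 !mul1r.
by rewrite Miz Mzi !subrr.
Qed.

Lemma confined_Inv N S X : confined N S X -> confined (Inv N X) S X.
Proof.
by move=> N0 i z iS zNX; rewrite !mxE (negbTE zNX) andbF /=; exact: N0.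
Qed.

Lemma det_Inv_restrict_row_in N X e :
  confined N (X :\ e) X ->
  \det (restrict_row e X (Inv N X)) = \det (restrict_row e X N).
Proof.
have trig P : confined P (X :\ e) X ->
    forall i j, i \in X -> j \notin X -> restrict_row e X P i j = 0.
  move=> P0 i j iX jNX; rewrite mxE jNX andbT; case: eqP => // /eqP ie.
  by have [] := P0 i j _ jNX; rewrite // !inE ie.
move=> N0; rewrite (det_blocktrig (trig _ (confined_Inv N0))).
rewrite (det_blocktrig (trig _ N0)); congr (_ * _).
  rewrite -det_tr -padmx_tr; congr (\det _); apply: eq_padmx => i j iX jX.
  by rewrite !mxE iX jX /= !andbF.
congr (\det _); apply: eq_padmx => i j; rewrite !in_setC => iNX jNX.
by rewrite !mxE (negbTE iNX).
Qed.

Lemma det_Inv_restrict_row_out N X e :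
  confined N (X :\ e) X ->
  \det (restrict_row e (~: X) (Inv N X)) = \det (restrict_row e (~: X) N).
Proof.
have trig P : confined P (X :\ e) X ->
    forall i j, i \in ~: (X :\ e) -> j \notin ~: (X :\ e) ->
    restrict_row e (~: X) P i j = 0.
  move=> P0 i j; rewrite !in_setC negbK => iNX' jX'.
  have jX : j \in X by move: jX'; rewrite inE => /andP[].
  rewrite mxE in_setC negbK jX andbT; case: eqP => // /eqP ie.
  have iNX : i \notin X by move: iNX'; rewrite !inE ie.
  by have [] := P0 j i jX' iNX.
move=> N0; rewrite (det_blocktrig (trig _ (confined_Inv N0))).
rewrite (det_blocktrig (trig _ N0)) setCK; congr (_ * _).
  congr (\det _); apply: eq_padmx => i j; rewrite !in_setC => iNX' jNX'.
  rewrite !mxE; case: ifP => // _; case: ifP => // /andP[iX jX].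
  have /eqP-> : i == e by move: iNX'; rewrite !inE iX andbT negbK.
  by have /eqP-> : j == e by move: jNX'; rewrite !inE jX andbT negbK.
rewrite -det_tr -padmx_tr; congr (\det _); apply: eq_padmx => i j.
rewrite !inE => /andP[ie iX] /andP[je jX].
by rewrite !mxE (negbTE ie) (negbTE je) iX jX.
Qed.

Lemma det_Inv_confined N X e :
  confined N (X :\ e) X -> \det (Inv N X) = \det N.
Proof.
move=> N0; rewrite (det_restrict_row_split e X N).
rewrite (det_restrict_row_split e X (Inv N X)).
by rewrite det_Inv_restrict_row_in // det_Inv_restrict_row_out.
Qed.

Lemma det_Inv_clan M X : clan M X -> \det (Inv M X) = \det M.
Proof.
move=> clM; have [->|[e eX]] := set_0Vmem X.
  by congr (\det _); apply/matrixP => i j; rewrite mxE !inE.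
pose E : 'M[R]_n := elim_mx (X :\ e) e.
have detEPE P : \det (E *m P *m E^T) = \det P.
  by rewrite !det_mulmx det_tr det_elim_mx ?mul1r ?mulr1 // !inE eqxx.
have E0 i j : (i \in X) != (j \in X) -> E i j = 0.
  move=> ij; have /negbTE ineqj : i != j by apply: contraNneq ij => ->.
  rewrite mxE ineqj.
  case: (eqVneq j e) => [je | _]; last by rewrite mulr0 subr0.
  have iNX : i \notin X by apply: contraNN ij => ->; rewrite je eX.
  by rewrite !inE (negbTE iNX) andbF mul0r subr0.
rewrite -detEPE -[\det M]detEPE -Inv_congruence //.
exact: det_Inv_confined (clan_elim_confined clM eX).
Qed.

End ClanInversion.

Lemma principal_submx_Inv (R : realType) n (M : 'M[R]_n) X Y :
  principal_submx (Inv M X) Y =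
  Inv (principal_submx M Y) [set i | enum_val i \in X].
Proof. by apply/matrixP => i j; rewrite !mxE !inE. Qed.

Lemma clan_principal_submx (R : realType) n (M : 'M[R]_n) X Y :
  clan M X -> clan (principal_submx M Y) [set i | enum_val i \in X].
Proof. by move=> clM i j k; rewrite !inE !mxE; exact: clM. Qed.

Theorem lemma5p1 (R : realType) (n : nat) (A : 'M[R]_n) (X : {set 'I_n}) :
  gen_tournament A -> clan A X ->
  forall Y : {set 'I_n}, Y != set0 ->
    \det (principal_submx (Inv A X) Y) = \det (principal_submx A Y).
Proof.
move=> _ clAX Y _.
by rewrite principal_submx_Inv det_Inv_clan //; exact: clan_principal_submx.
Qed.
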